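(* Let $S$ be any one of the subspecies $33_3$, $33_4$, $35_3$, $35_4$, $37$, $38$ of isonemal fabrics. Then there exist orders $n$ such that every isonemal fabric of subspecies $S$, of order $n$, whose symmetry group is based on a level-1 lattice unit of area $5$, can be perfectly coloured by thick striping with $5$ colours in two different ways, in each of which the redundant cells form $2\times 2$ blocks arranged as the $(5,3)$ satin doubled.
   Context: Fabrics. Strands are parallel bands of unit width: warps are vertical, wefts horizontal, and warp $i$ and weft $j$ cross in the unit square cell $(i,j)$, $i,j\in\mathbb{Z}$. A (pre)fabric specifies at every cell which of the two crossing strands lies on top as seen from a fixed side; its design colours cell $(i,j)$ dark if the warp is on top and pale if the weft is on top. Designs are doubly periodic; a fabric is a prefabric that does not fall apart into separate layers. The order of a fabric is the common period of the dark/pale sequence along its strands. Symmetries. A symmetry is a pair $(g,\epsilon)$ where $g$ is an isometry of the plane mapping the set of strands onto itself and $\epsilon$ is either the identity or $\tau$, the reflection in the plane of the fabric (which reverses which strand is on top in every cell), such that the composite maps the fabric onto itself. They form the symmetry group $G_1$; those with $\epsilon$ the identity are side-preserving, the others side-reversing. A fabric is isonemal if $G_1$ acts transitively on its strands. Species. Species 33–39 consist of the isonemal fabrics whose symmetry group contains quarter turns (possibly composed with $\tau$) but no reflections or glide-reflections (type $p4$). A lattice unit of $G_1$ is a square whose corners are quarter-turn centres and whose sides are vectors $(M,N)$, $(-N,M)$ generating the translation lattice of $G_1$; its centre is also a quarter-turn centre. It is of level 1 if $M,N$ are relatively prime of opposite parity. If the level-1 unit has side vectors $v=(M_1,N_1)$,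 $w=(-N_1,M_1)$, the level-2 unit (same centre) has side vectors $v+w$, $v-w$, the level-3 unit is the level-1 unit doubled and the level-4 unit is the level-2 unit doubled; the group is then based on the level-1 unit of area $M_1^2+N_1^2$. A quarter-turn centre is marked $\square$ if the quarter turn about it is side-preserving and $\blacksquare$ if it needs composition with $\tau$. Subspecies: $33_3$: level 3, all corners and centres $\square$; $35_3$: level 3, all $\blacksquare$; $38$: level 3, one of corners/centre $\square$ and the other $\blacksquare$; $33_4$: level 4, all $\square$; $35_4$: level 4, all $\blacksquare$; $37$: level 4, mixed $\square$ and $\blacksquare$. Colouring. A colouring assigns a colour to each strand; it is perfect if every symmetry of the fabric permutes colours coherently (if it maps one strand of colour $a$ to one of colour $b$, it maps every strand of colour $a$ to a strand of colour $b$). Thick striping with $p$ colours colours consecutive parallel strands periodically $c_1,c_1,c_2,c_2,\dots,c_p,c_p,c_1,\dots$ in each direction, using the same $p$ colours for warps and wefts. A cell is redundant if its warp and weft have the same colour. The $(5,3)$ satin is the order-5 design with dark cells $(i,j)$, $j\equiv 2i\pmod 5$; the satin doubled is the design obtained by replacing each strand by two adjacent strands behaving identically, so that each cell becomes a $2\times2$ block; ''redundant blocks arranged as the $(5,3)$ satin doubled'' means that the set of redundant cells is congruent to the set of dark cells of this doubled design. *)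

From Stdlib Require Import ZArith Bool.
Open Scope Z_scope.

(** Cells are pairs (i,j) : Z*Z, cell (i,j) being the crossing of warp i
    (vertical) and weft j (horizontal).  We use the cell centres as
    coordinates: cell (i,j) has centre at the point (i,j) of the plane. *)

(** A design: [D (i,j) = true] iff cell (i,j) is dark (warp on top). *)
Definition design := Z * Z -> bool.

Inductive strand := Warp (i : Z) | Weft (j : Z).

(** Isometries of the plane mapping the set of strands onto itself:
    x |-> A x + t with A a signed permutation matrix and t in Z^2
    (in cell-centre coordinates).  [sw] = the coordinates are swapped,
    [n1]/[n2] = the first/second output coordinate is negated. *)
Record gmap := GMap { sw : bool; n1 : bool; n2 : bool; t1 : Z; t2 : Z }.

Definition sgn (b : bool) : Z := if b then -1 else 1.

Definition act_cell (g : gmap) (c : Z * Z) : Z * Z :=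
  let '(x, y) := if sw g then (snd c, fst c) else (fst c, snd c) in
  (sgn (n1 g) * x + t1 g, sgn (n2 g) * y + t2 g).

Definition act_strand (g : gmap) (s : strand) : strand :=
  match s with
  | Warp i => if sw g then Weft (sgn (n2 g) * i + t2 g)
              else Warp (sgn (n1 g) * i + t1 g)
  | Weft j => if sw g then Warp (sgn (n1 g) * j + t1 g)
              else Weft (sgn (n2 g) * j + t2 g)
  end.

(** [(g, e)] is a symmetry of the design ([e = true] means composed with
    tau, the reflection in the plane of the fabric).  If [g] exchanges
    warps and wefts, the colour of the image cell is reversed; tau reverses
    it once more. *)
Definition is_sym (D : design) (g : gmap) (e : bool) : Prop :=
  forall c, D (act_cell g c) = xorb (D c) (xorb (sw g) e).

Definition doubly_periodic (D : design) : Prop :=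
  exists p, 0 < p /\ forall i j, D (i + p, j) = D (i, j) /\ D (i, j + p) = D (i, j).

Definition falls_apart (D : design) : Prop :=
  exists A : strand -> Prop, (exists x, A x) /\ (exists y, ~ A y) /\
    forall i j, (A (Warp i) -> ~ A (Weft j) -> D (i, j) = true) /\
                (A (Weft j) -> ~ A (Warp i) -> D (i, j) = false).

Definition is_fabric (D : design) : Prop := doubly_periodic D /\ ~ falls_apart D.

Definition isonemal (D : design) : Prop :=
  forall x y, exists g e, is_sym D g e /\ act_strand g x = y.

Definition least_period (f : Z -> bool) (n : Z) : Prop :=
  0 < n /\ (forall k, f (k + n) = f k) /\
  forall m, 0 < m < n -> ~ (forall k, f (k + m) = f k).

Definition has_order (D : design) (n : Z) : Prop :=
  (forall i, least_period (fun j => D (i, j)) n) /\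
  (forall j, least_period (fun i => D (i, j)) n).

Definition orientation_reversing (g : gmap) : Prop :=
  (* det = -1: reflections and glide-reflections *)
  xorb (sw g) (xorb (n1 g) (n2 g)) = true.
Definition quarter_turn (g : gmap) : Prop :=
  sw g = true /\ n1 g <> n2 g.
Definition transl (a b : Z) : gmap := GMap false false false a b.

Definition type_p4 (D : design) : Prop :=
  (exists g e, is_sym D g e /\ quarter_turn g) /\
  (forall g e, is_sym D g e -> ~ orientation_reversing g).

Definition species_33_39 (D : design) : Prop :=
  is_fabric D /\ isonemal D /\ type_p4 D.

Definition lattice_generated (D : design) (M N : Z) : Prop :=
  forall a b, (exists e, is_sym D (transl a b) e) <->
              exists x y, a = x * M - y * N /\ b = x * N + y * M.

(** Quarter turn (by +90 degrees) about the point P/2 (doubled coordinates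
    P = (P1,P2), with P1 = P2 mod 2 so that it maps cells to cells). *)
Definition qt (P1 P2 : Z) : gmap :=
  GMap true true false ((P1 + P2) / 2) ((P2 - P1) / 2).

Inductive mark := Open
                | Filled .

Definition marked (D : design) (P1 P2 : Z) (m : mark) : Prop :=
  Z.even (P1 + P2) = true /\
  is_sym D (qt P1 P2) (match m with Open => false | Filled => true end).

(** A lattice unit of G1 with corner P/2 and sides (M,N), (-N,M), whose
    corners are marked [mc] and whose centre (P + (M-N, N+M))/2 is marked
    [mz]. *)
Definition lattice_unit (D : design) (P1 P2 M N : Z) (mc mz : mark) : Prop :=
  lattice_generated D M N /\ marked D P1 P2 mc /\
  marked D (P1 + (M - N)) (P2 + (N + M)) mz.

Definition level1 (M N : Z) : Prop := Z.gcd M N = 1 /\ Z.odd (M + N) = true.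

(** Side vector of the level-k unit built on the level-1 unit with side
    vector v = (M1,N1), w = (-N1,M1):
    level 1: v; level 2: v+w; level 3: 2v; level 4: 2(v+w). *)
Definition side_vec (k : nat) (M1 N1 : Z) : Z * Z :=
  match k with
  | 1%nat => (M1, N1)
  | 2%nat => (M1 - N1, N1 + M1)
  | 3%nat => (2 * M1, 2 * N1)
  | _ => (2 * (M1 - N1), 2 * (N1 + M1))
  end.

Inductive subspecies := S33_3 | S33_4 | S35_3 | S35_4 | S37 | S38.

Definition sub_level (S : subspecies) : nat :=
  match S with
  | S33_3 | S35_3 | S38 => 3%nat
  | S33_4 | S35_4 | S37 => 4%nat
  end.

Definition sub_marks (S : subspecies) (mc mz : mark) : Prop :=
  match S with
  | S33_3 | S33_4 => mc = Open /\ mz = Open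
  | S35_3 | S35_4 => mc = Filled /\ mz = Filled
  | S37 | S38 => mc <> mz
  end.

Definition in_subspecies (S : subspecies) (D : design) (M1 N1 : Z) : Prop :=
  species_33_39 D /\ level1 M1 N1 /\
  exists P1 P2 mc mz, sub_marks S mc mz /\
    lattice_unit D P1 P2 (fst (side_vec (sub_level S) M1 N1))
                         (snd (side_vec (sub_level S) M1 N1)) mc mz.

Definition colouring := strand -> Z.

Definition perfect (D : design) (col : colouring) : Prop :=
  forall g e, is_sym D g e ->
    forall x y, col x = col y -> col (act_strand g x) = col (act_strand g y).

Definition thick_striping (p : Z) (col : colouring) : Prop :=
  exists (a b : Z) (alpha beta : Z -> Z),
    (forall k l, 0 <= k < p -> 0 <= l < p -> alpha k = alpha l -> k = l) /\
    (forall k l, 0 <= k < p -> 0 <= l < p -> beta k = beta l -> k = l) /\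
    (forall k, 0 <= k < p -> exists l, 0 <= l < p /\ beta l = alpha k) /\
    (forall i, col (Warp i) = alpha (((i - a) / 2) mod p)) /\
    (forall j, col (Weft j) = beta (((j - b) / 2) mod p)).

Definition redundant (col : colouring) (c : Z * Z) : Prop :=
  col (Warp (fst c)) = col (Weft (snd c)).

Definition satin53_doubled (c : Z * Z) : Prop :=
  (snd c / 2) mod 5 = (2 * (fst c / 2)) mod 5.

Definition redundant_satin_doubled (col : colouring) : Prop :=
  exists g : gmap, forall c, redundant col (act_cell g c) <-> satin53_doubled c.

Definition good_colouring (D : design) (col : colouring) : Prop :=
  thick_striping 5 col /\ perfect D col /\ redundant_satin_doubled col.

Definition different_colourings (c1 c2 : colouring) : Prop :=
  exists x y, ~ (c1 x = c1 y <-> c2 x = c2 y).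

(* Write 2(M, N) for the side of the lattice unit (level 3 or 4), so that every translation moves
   strands by an even amount, and let m in {2, 3}, a square root of -1 mod 5, satisfy M = m N
   (mod 5): such an m exists because M1^2 + N1^2 = 5, and the congruence survives the passage from
   level 3 to level 4.  Colour the warps of thick stripe k by k mod 5 and the wefts of thick stripe
   l by m l + c mod 5.  As the symmetry group has no reflections, every symmetry is a lattice
   translation after a power of a quarter turn.  The translation by 2(xM - yN, xN + yM) adds
   xM - yN to every colour, and the quarter turn permutes the colours coherently as soon as c
   solves a linear congruence, solvable because m + 1 is a unit mod 5.  Moving the warp stripes by
   one strand gives a second, different colouring.  The redundant cells are those with k = m l + c
   (mod 5), the (5,3) satin doubled.  None of this depends on the order; the orders come from
   explicit fabrics of period 20 whose properties are checked by computation. *)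

From Stdlib Require Import ZArith Lia Bool List Classical.
Import ListNotations.
Open Scope Z_scope.

Definition qturn (T1 T2 : Z) : gmap := GMap true true false T1 T2.

Ltac gmap_simpl :=
  cbv [act_strand act_cell Nat.iter nat_rect qturn transl sw n1 n2 t1 t2 sgn fst snd].

Definition cell_symmetry (D : design) (f : Z * Z -> Z * Z) : Prop :=
  exists x, forall c, D (f c) = xorb (D c) x.

Lemma cell_symmetry_act D g e : is_sym D g e -> cell_symmetry D (act_cell g).
Proof. intros H. exists (xorb (sw g) e). exact H. Qed.

Lemma cell_symmetry_iter D f k : cell_symmetry D f -> cell_symmetry D (Nat.iter k f).
Proof.
  intros [x Hf]. induction k as [|k [y IH]].
  - exists false. intros c. now rewrite xorb_false_r.
  - exists (xorb y x). intros c. simpl. rewrite Hf, IH. apply xorb_assoc.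
Qed.

Lemma iter_surjective {A} (f : A -> A) k :
  (forall d, exists c, f c = d) -> forall d, exists c, Nat.iter k f c = d.
Proof.
  intros Hf. induction k as [|k IH]; intros d; [now exists d|].
  destruct (Hf d) as [d' <-]. destruct (IH d') as [c <-]. now exists c.
Qed.

Lemma qturn_surjective T1 T2 d : exists c, act_cell (qturn T1 T2) c = d.
Proof.
  destruct d as [d1 d2]. exists (d2 - T2, - d1 + T1).
  gmap_simpl. f_equal; ring.
Qed.

(* [transl u v] is [g] after a right inverse of [f]. *)
Lemma transl_symmetry_of_offset D f g e u v :
  cell_symmetry D f -> (forall d, exists c, f c = d) -> is_sym D g e ->
  (forall c, act_cell g c = (fst (f c) + u, snd (f c) + v)) ->
  exists e', is_sym D (transl u v) e'.
Proof.
  intros [x Hf] Hsurj Hg Hgf. exists (xorb x (xorb (sw g) e)). intros d.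
  destruct (Hsurj d) as [c <-].
  replace (act_cell (transl u v) (f c)) with (act_cell g c)
    by (rewrite Hgf; destruct (f c); gmap_simpl; f_equal; ring).
  rewrite Hg, Hf. cbn [sw transl]. now destruct (D c), x, (sw g), e.
Qed.

Lemma rotation_decomposition T1 T2 g : ~ orientation_reversing g ->
  exists k u v, (k < 4)%nat /\
    (forall c, act_cell g c = (fst (Nat.iter k (act_cell (qturn T1 T2)) c) + u,
                               snd (Nat.iter k (act_cell (qturn T1 T2)) c) + v)) /\
    (forall s, act_strand g s = act_strand (transl u v) (Nat.iter k (act_strand (qturn T1 T2)) s)).
Proof.
  unfold orientation_reversing. intros Hrot.
  destruct g as [[] [] [] u1 u2]; cbn in Hrot; try (exfalso; now apply Hrot).
  all: [> exists 1%nat, (u1 - T1), (u2 - T2) | exists 3%nat, (u1 + T2), (u2 - T1)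
   | exists 2%nat, (u1 - (T1 - T2)), (u2 - (T1 + T2)) | exists 0%nat, u1, u2].
  all: split; [lia | split; [intros [c1 c2] | intros [i|j]]]; gmap_simpl; f_equal; ring.
Qed.

Section QuarterTurnGroup.

Variables (D : design) (M N T1 T2 : Z) (eh : bool).
Hypothesis lattice : lattice_generated D M N.
Hypothesis qturn_sym : is_sym D (qturn T1 T2) eh.
Hypothesis no_reflection : forall g e, is_sym D g e -> ~ orientation_reversing g.

Lemma symmetry_decomposition g e : is_sym D g e ->
  exists k x y, (k < 4)%nat /\ forall s,
    act_strand g s =
    act_strand (transl (x * M - y * N) (x * N + y * M)) (Nat.iter k (act_strand (qturn T1 T2)) s).
Proof.
  intros Hg.
  destruct (rotation_decomposition T1 T2 g (no_reflection g e Hg))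
    as (k & u & v & Hk & Hcell & Hstrand).
  destruct (transl_symmetry_of_offset D _ g e u v
              (cell_symmetry_iter D _ k (cell_symmetry_act D _ _ qturn_sym))
              (iter_surjective _ k (qturn_surjective T1 T2)) Hg Hcell) as [e' He'].
  destruct (proj1 (lattice u v) (ex_intro _ e' He')) as (x & y & -> & ->).
  now exists k, x, y.
Qed.

(* Lattice translations move warps by even amounts, so a symmetry taking warp 0 to warp 1 must be
   a half-turn. *)
Lemma qturn_centre_odd : Z.Even M -> Z.Even N -> isonemal D -> Z.Odd (T1 - T2).
Proof.
  intros [M' HM] [N' HN] Hiso.
  destruct (Hiso (Warp 0) (Warp 1)) as (g & e & Hg & Hmove).
  destruct (symmetry_decomposition g e Hg) as (k & x & y & Hk & Hs).
  rewrite Hs in Hmove. revert Hmove.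
  destruct k as [|[|[|[|k]]]]; try lia; gmap_simpl; try discriminate;
    intros Hmove; apply (f_equal (fun s => match s with Warp i => i | Weft j => j end)) in Hmove;
    rewrite HM, HN in Hmove.
  - lia.
  - exists (- (x * M' - y * N')). lia.
Qed.

End QuarterTurnGroup.

Definition stripe (a i : Z) : Z := (i - a) / 2.

Definition striped (a b m c : Z) : colouring := fun s =>
  match s with
  | Warp i => stripe a i mod 5
  | Weft j => (m * stripe b j + c) mod 5
  end.

Lemma striped_thick_striping a b m c : m = 2 \/ m = 3 -> thick_striping 5 (striped a b m c).
Proof.
  intros Hm. exists a, b, (fun k => k), (fun l => (m * l + c) mod 5).
  split; [|split; [|split; [|split]]].
  - auto.
  - intros k l Hk Hl E. destruct Hm as [-> | ->]; Z.div_mod_to_equations; lia.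
  - intros k Hk. exists (((5 - m) * (k - c)) mod 5). split.
    + apply Z.mod_pos_bound; lia.
    + destruct Hm as [-> | ->]; Z.div_mod_to_equations; lia.
  - reflexivity.
  - intros j. cbn beta. unfold striped, stripe.
    now rewrite <- (Z.add_mod_idemp_l (m * ((j - b) / 2 mod 5))), Z.mul_mod_idemp_r,
      Z.add_mod_idemp_l.
Qed.

Lemma striped_redundant_satin_doubled a b m c :
  m = 2 \/ m = 3 -> redundant_satin_doubled (striped a b m c).
Proof.
  intros [-> | ->]; [exists (GMap true false false (a + 2 * c) b) | exists (transl (a + 2 * c) b)];
    intros [x y]; unfold redundant, satin53_doubled, striped, stripe; gmap_simpl;
    split; intros; Z.div_mod_to_equations; lia.
Qed.

Lemma striped_different b m c b' c' : different_colourings (striped 0 b m c) (striped 1 b' m c').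
Proof. exists (Warp 0), (Warp 1). cbn. intros [H _]. now specialize (H eq_refl). Qed.

Definition colour_coherent (col : colouring) (f : strand -> strand) : Prop :=
  exists phi : Z -> Z, forall s, col (f s) = phi (col s).

Lemma perfect_of_colour_coherent D col :
  (forall g e, is_sym D g e -> colour_coherent col (act_strand g)) -> perfect D col.
Proof. intros H g e Hg x y Hxy. destruct (H g e Hg) as [phi Hphi]. now rewrite !Hphi, Hxy. Qed.

Lemma colour_coherent_comp col f f' :
  colour_coherent col f -> colour_coherent col f' -> colour_coherent col (fun s => f (f' s)).
Proof.
  intros [phi Hf] [phi' Hf']. exists (fun v => phi (phi' v)). intros s. now rewrite Hf, Hf'.
Qed.

Lemma colour_coherent_iter col f k : colour_coherent col f -> colour_coherent col (Nat.iter k f).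
Proof.
  intros Hf. induction k as [|k IH]; [now exists (fun v => v)|].
  exact (colour_coherent_comp col f _ Hf IH).
Qed.

Lemma striped_coherent_transl a b m c M N x y : m = 2 \/ m = 3 -> (5 | M - m * N) ->
  colour_coherent (striped a b m c)
    (act_strand (transl (x * (2 * M) - y * (2 * N)) (x * (2 * N) + y * (2 * M)))).
Proof.
  intros Hm [k Hk].
  set (A := x * M - y * N). set (B := x * N + y * M).
  (* from M = m N and m^2 = -1 (mod 5) *)
  assert (HB : exists K, m * B = A + 5 * K).
  { assert (HM : M = 5 * k + m * N) by lia. unfold A, B. rewrite HM.
    destruct Hm as [-> | ->];
      [exists (y * (N + 2 * k) - x * k) | exists (y * (2 * N + 3 * k) - x * k)]; ring. }
  destruct HB as [K HK].
  replace (x * (2 * M) - y * (2 * N)) with (2 * A) by (unfold A; ring).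
  replace (x * (2 * N) + y * (2 * M)) with (2 * B) by (unfold B; ring).
  clearbody A B.
  exists (fun v => (v + A) mod 5). intros [i|j]; gmap_simpl; unfold striped.
  - unfold stripe. Z.div_mod_to_equations; lia.
  - assert (Hs : stripe b (1 * j + 2 * B) = stripe b j + B)
      by (unfold stripe; Z.div_mod_to_equations; lia).
    rewrite Hs, Z.mul_add_distr_l, HK. Z.div_mod_to_equations; lia.
Qed.

Lemma striped_coherent_qturn a m c T1 T2 u :
  m = 2 \/ m = 3 -> T1 - T2 = 2 * u + 1 -> (5 | (m + 1) * c + m * a - u) ->
  colour_coherent (striped a (T2 - a) m c) (act_strand (qturn T1 T2)).
Proof.
  (* Warp stripe k goes to weft stripe k + a and weft stripe l to warp stripe u - l; the congruence
     on c makes the two induced colour maps agree. *)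
  intros Hm HT Hc. exists (fun v => (m * (v + a) + c) mod 5).
  intros [i|j]; gmap_simpl; unfold striped.
  - assert (Hs : stripe (T2 - a) (1 * i + T2) = stripe a i + a)
      by (unfold stripe; Z.div_mod_to_equations; lia).
    rewrite Hs. destruct Hm as [-> | ->]; Z.div_mod_to_equations; lia.
  - assert (Hs : stripe a (-1 * j + T1) = u - stripe (T2 - a) j)
      by (unfold stripe; Z.div_mod_to_equations; lia).
    rewrite Hs. destruct Hc as [k Hk].
    destruct Hm as [-> | ->]; Z.div_mod_to_equations; lia.
Qed.

Lemma striped_perfect D M N T1 T2 eh a m c u :
  m = 2 \/ m = 3 -> (5 | M - m * N) -> lattice_generated D (2 * M) (2 * N) ->
  is_sym D (qturn T1 T2) eh -> (forall g e, is_sym D g e -> ~ orientation_reversing g) ->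
  T1 - T2 = 2 * u + 1 -> (5 | (m + 1) * c + m * a - u) ->
  perfect D (striped a (T2 - a) m c).
Proof.
  intros Hm HMN Hlat Hq Hrot HT Hc. apply perfect_of_colour_coherent. intros g e Hg.
  destruct (symmetry_decomposition D _ _ T1 T2 eh Hlat Hq Hrot g e Hg) as (k & x & y & _ & Hs).
  destruct (colour_coherent_comp _ _ _ (striped_coherent_transl a (T2 - a) m c M N x y Hm HMN)
              (colour_coherent_iter _ _ k (striped_coherent_qturn a m c T1 T2 u Hm HT Hc)))
    as [phi Hphi].
  exists phi. intros s. rewrite Hs. apply Hphi.
Qed.

Lemma colour_offset_exists m a u : m = 2 \/ m = 3 -> exists c, (5 | (m + 1) * c + m * a - u).
Proof.
  intros [-> | ->]; [exists (2 * (u - 2 * a)); exists (u - 2 * a)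
                    | exists (4 * (u - 3 * a)); exists (3 * u - 9 * a)]; ring.
Qed.

Lemma striped_good_colouring D a b m c :
  m = 2 \/ m = 3 -> perfect D (striped a b m c) -> good_colouring D (striped a b m c).
Proof.
  intros Hm Hperf.
  split; [|split];
    [apply striped_thick_striping | | apply striped_redundant_satin_doubled]; assumption.
Qed.

Lemma two_good_colourings D M N T1 T2 eh m :
  m = 2 \/ m = 3 -> (5 | M - m * N) -> lattice_generated D (2 * M) (2 * N) ->
  is_sym D (qturn T1 T2) eh -> (forall g e, is_sym D g e -> ~ orientation_reversing g) ->
  isonemal D ->
  exists col1 col2,
    good_colouring D col1 /\ good_colouring D col2 /\ different_colourings col1 col2.
Proof.
  intros Hm HMN Hlat Hq Hrot Hiso.
  destruct (qturn_centre_odd D _ _ T1 T2 eh Hlat Hq Hrot) as [u Hu];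
    [now exists M | now exists N | exact Hiso |].
  destruct (colour_offset_exists m 0 u Hm) as [c0 Hc0].
  destruct (colour_offset_exists m 1 u Hm) as [c1 Hc1].
  exists (striped 0 (T2 - 0) m c0), (striped 1 (T2 - 1) m c1).
  split; [|split]; [..| apply striped_different]; apply striped_good_colouring;
    eauto using striped_perfect.
Qed.

Lemma sqrt_minus_one_mod5 M1 N1 : M1 * M1 + N1 * N1 = 5 ->
  exists m, (m = 2 \/ m = 3) /\ (5 | M1 - m * N1).
Proof.
  intros H. exists (if (M1 - 2 * N1) mod 5 =? 0 then 2 else 3).
  split; [destruct (_ =? 0); auto|].
  apply Z.mod_divide; [discriminate|].
  assert (HM : M1 = -2 \/ M1 = -1 \/ M1 = 0 \/ M1 = 1 \/ M1 = 2) by nia.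
  assert (HN : N1 = -2 \/ N1 = -1 \/ N1 = 0 \/ N1 = 1 \/ N1 = 2) by nia.
  destruct HM as [-> | [-> | [-> | [-> | ->]]]]; destruct HN as [-> | [-> | [-> | [-> | ->]]]];
    try discriminate H; reflexivity.
Qed.

Lemma half_side_congruence S M1 N1 m : m = 2 \/ m = 3 -> (5 | M1 - m * N1) ->
  exists M N, side_vec (sub_level S) M1 N1 = (2 * M, 2 * N) /\ (5 | M - m * N).
Proof.
  intros Hm [k Hk].
  destruct S; cbn; first [exists M1, N1; split; [f_equal | exists k]; lia
                         | exists (M1 - N1), (N1 + M1); split; [f_equal; ring|]].
  all: destruct Hm as [-> | ->]; [exists (- (k + N1)) | exists (-2 * (k + N1))]; lia.
Qed.

Lemma subspecies_good_colourings S D M1 N1 : M1 * M1 + N1 * N1 = 5 -> in_subspecies S D M1 N1 ->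
  exists col1 col2,
    good_colouring D col1 /\ good_colouring D col2 /\ different_colourings col1 col2.
Proof.
  intros H5 [[_ [Hiso [_ Hrot]]] [_ (P1 & P2 & mc & mz & _ & Hlat & [_ Hq] & _)]].
  destruct (sqrt_minus_one_mod5 _ _ H5) as (m & Hm & Hcong).
  destruct (half_side_congruence S M1 N1 m Hm Hcong) as (M & N & Hside & HMN).
  rewrite Hside in Hlat.
  exact (two_good_colourings D M N _ _ _ m Hm HMN Hlat Hq Hrot Hiso).
Qed.

(* If warp [i] lies in an upper layer then so does weft [j] (it crosses over warp [i]), hence so
   does warp [k] (it crosses over weft [j]). *)
Definition lifts (D : design) (i k : Z) : Prop := exists j, D (i, j) = false /\ D (k, j) = true.

Lemma not_falls_apart_of_lifts D :
  (forall i, exists k, lifts D i k /\ lifts D k (i + 1)) ->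
  (forall i, exists k, lifts D (i + 1) k /\ lifts D k i) ->
  (forall j, exists i, D (i, j) = true) -> (forall j, exists i, D (i, j) = false) ->
  ~ falls_apart D.
Proof.
  intros Hup Hdown Hdark Hpale (A & [x Hx] & [y Hy] & HA).
  assert (Hweft : forall i j, A (Warp i) -> D (i, j) = false -> A (Weft j)).
  { intros i j Hi Hij. apply NNPP. intros Hj. now rewrite (proj1 (HA i j) Hi Hj) in Hij. }
  assert (Hwarp : forall i j, A (Weft j) -> D (i, j) = true -> A (Warp i)).
  { intros i j Hj Hij. apply NNPP. intros Hi. now rewrite (proj2 (HA i j) Hj Hi) in Hij. }
  assert (Hlift : forall i k, A (Warp i) -> lifts D i k -> A (Warp k))
    by (intros i k Hi [j [Hij Hkj]]; eauto).
  assert (Hwarps : forall i0, A (Warp i0) -> forall i, A (Warp i)).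
  { intros i0 Hi0 i. replace i with (i0 + (i - i0)) by ring.
    induction (i - i0) as [|z IH|z IH] using Z.peano_ind.
    - now rewrite Z.add_0_r.
    - destruct (Hup (i0 + z)) as (k & H1 & H2).
      replace (i0 + Z.succ z) with (i0 + z + 1) by lia. eauto.
    - destruct (Hdown (i0 + Z.pred z)) as (k & H1 & H2).
      replace (i0 + Z.pred z + 1) with (i0 + z) in H1 by lia. eauto. }
  assert (Hsome : exists i0, A (Warp i0)).
  { destruct x as [i0|j0]; [now exists i0|].
    destruct (Hdark j0) as [i0 Hi0]. exists i0. exact (Hwarp i0 j0 Hx Hi0). }
  destruct Hsome as [i0 Hi0].
  apply Hy. destruct y as [i|j]; [exact (Hwarps i0 Hi0 i)|].
  destruct (Hpale j) as [i Hi]. exact (Hweft i j (Hwarps i0 Hi0 i) Hi).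
Qed.

Lemma least_period_ext f f' n : (forall k, f k = f' k) -> least_period f' n -> least_period f n.
Proof.
  intros E (Hn & Hper & Hmin). split; [exact Hn | split].
  - intros k. rewrite !E. apply Hper.
  - intros m Hm Hf. apply (Hmin m Hm). intros k. rewrite <- !E. apply Hf.
Qed.

Definition in_lattice (M N a b : Z) : Prop := exists x y, a = x * M - y * N /\ b = x * N + y * M.

Lemma in_lattice_add_mul M N a b a' b' k :
  in_lattice M N a b -> in_lattice M N a' b' -> in_lattice M N (a + k * a') (b + k * b').
Proof.
  intros (x & y & -> & ->) (x' & y' & -> & ->). exists (x + k * x'), (y + k * y'). split; ring.
Qed.

Lemma in_lattice_mod M N a b : in_lattice M N 20 0 -> in_lattice M N 0 20 ->
  in_lattice M N a b <-> in_lattice M N (a mod 20) (b mod 20).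
Proof.
  intros H1 H2.
  assert (Ha : a mod 20 = a + - (a / 20) * 20) by (Z.div_mod_to_equations; lia).
  assert (Hb : b mod 20 = b + - (b / 20) * 20) by (Z.div_mod_to_equations; lia).
  split; intros H.
  - pose proof (in_lattice_add_mul _ _ _ _ _ _ (- (b / 20))
                  (in_lattice_add_mul _ _ _ _ _ _ (- (a / 20)) H H1) H2) as H'.
    rewrite !Z.mul_0_r, !Z.add_0_r in H'. now rewrite Ha, Hb.
  - pose proof (in_lattice_add_mul _ _ _ _ _ _ (b / 20)
                  (in_lattice_add_mul _ _ _ _ _ _ (a / 20) H H1) H2) as H'.
    rewrite !Z.mul_0_r, !Z.add_0_r, Ha, Hb in H'.
    replace (a + - (a / 20) * 20 + a / 20 * 20) with a in H' by ring.
    now replace (b + - (b / 20) * 20 + b / 20 * 20) with b in H' by ring.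
Qed.

Definition in_latticeb (M N a b : Z) : bool :=
  ((a * M + b * N) mod (M * M + N * N) =? 0) && ((b * M - a * N) mod (M * M + N * N) =? 0).

Lemma in_latticeb_spec M N a b :
  M * M + N * N <> 0 -> in_latticeb M N a b = true <-> in_lattice M N a b.
Proof.
  intros Hq. unfold in_latticeb. rewrite andb_true_iff, !Z.eqb_eq, !Z.mod_divide by exact Hq.
  split.
  - intros [[x Hx] [y Hy]]. exists x, y.
    split; apply (Z.mul_cancel_r _ _ (M * M + N * N) Hq).
    + transitivity (M * (a * M + b * N) - N * (b * M - a * N)); [ring | rewrite Hx, Hy; ring].
    + transitivity (N * (a * M + b * N) + M * (b * M - a * N)); [ring | rewrite Hx, Hy; ring].
  - intros (x & y & -> & ->). split; [exists x | exists y]; ring.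
Qed.

Definition residues : list Z := map Z.of_nat (seq 0 20).

Lemma mod_in_residues x : In (x mod 20) residues.
Proof.
  unfold residues.
  replace (x mod 20) with (Z.of_nat (Z.to_nat (x mod 20))) by (Z.div_mod_to_equations; lia).
  apply in_map, in_seq. Z.div_mod_to_equations; lia.
Qed.

(* Unlike [forallb], this stops at the first failure under call-by-value evaluation. *)
Fixpoint forallb_lazy {A} (f : A -> bool) (l : list A) : bool :=
  match l with [] => true | x :: l' => if f x then forallb_lazy f l' else false end.

Lemma forallb_lazy_eq {A} (f : A -> bool) l : forallb_lazy f l = forallb f l.
Proof. induction l as [|x l IH]; cbn; [reflexivity|]. now rewrite IH. Qed.

Definition bools : list bool := [false; true].

Lemma in_bools b : In b bools.
Proof. destruct b; cbn; auto. Qed.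

Definition candidates : list (gmap * bool) :=
  flat_map (fun s => flat_map (fun a => flat_map (fun b => flat_map (fun u1 => flat_map (fun u2 =>
    map (fun e => (GMap s a b u1 u2, e)) bools) residues) residues) bools) bools) bools.

Lemma in_candidates s a b u1 u2 e : In (GMap s a b (u1 mod 20) (u2 mod 20), e) candidates.
Proof.
  unfold candidates.
  apply in_flat_map; exists s; split; [apply in_bools|].
  apply in_flat_map; exists a; split; [apply in_bools|].
  apply in_flat_map; exists b; split; [apply in_bools|].
  apply in_flat_map; exists (u1 mod 20); split; [apply mod_in_residues|].
  apply in_flat_map; exists (u2 mod 20); split; [apply mod_in_residues|].
  apply in_map, in_bools.
Qed.

(* Bit [j] of the [i]-th entry of [rows] is set iff cell (i, j) is dark, both indices read mod 20. *)
Definition table (rows : list Z) : design :=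
  fun c => Z.testbit (nth (Z.to_nat (fst c mod 20)) rows 0) (snd c mod 20).

Section Table.

Variable rows : list Z.
Let D := table rows.

Lemma table_congr x y x' y' :
  x mod 20 = x' mod 20 -> y mod 20 = y' mod 20 -> D (x, y) = D (x', y').
Proof. intros Hx Hy. unfold D, table. cbn. now rewrite Hx, Hy. Qed.

Lemma table_mod x y : D (x, y) = D (x mod 20, y mod 20).
Proof. apply table_congr; now rewrite Z.mod_mod. Qed.

Lemma table_doubly_periodic : doubly_periodic D.
Proof.
  exists 20. split; [lia|]. intros i j. split; apply table_congr; Z.div_mod_to_equations; lia.
Qed.

Lemma table_act_congr s a b u1 u2 u1' u2' x y x' y' :
  u1 mod 20 = u1' mod 20 -> u2 mod 20 = u2' mod 20 ->
  x mod 20 = x' mod 20 -> y mod 20 = y' mod 20 ->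
  D (act_cell (GMap s a b u1 u2) (x, y)) = D (act_cell (GMap s a b u1' u2') (x', y')).
Proof.
  intros. destruct s; gmap_simpl; apply table_congr; destruct a, b; Z.div_mod_to_equations; lia.
Qed.

Lemma is_sym_shift s a b u1 u2 u1' u2' e : u1 mod 20 = u1' mod 20 -> u2 mod 20 = u2' mod 20 ->
  is_sym D (GMap s a b u1 u2) e -> is_sym D (GMap s a b u1' u2') e.
Proof.
  intros H1 H2 H [x y]. rewrite <- (table_act_congr s a b u1 u2 u1' u2' x y x y) by auto. apply H.
Qed.

Definition symb (g : gmap) (e : bool) : bool :=
  forallb_lazy (fun i => forallb (fun j =>
    Bool.eqb (D (act_cell g (i, j))) (xorb (D (i, j)) (xorb (sw g) e))) residues) residues.

Lemma symb_spec g e : symb g e = true <-> is_sym D g e.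
Proof.
  unfold symb. rewrite forallb_lazy_eq, forallb_forall. split.
  - intros H [x y]. destruct g as [s a b u1 u2].
    specialize (H _ (mod_in_residues x)). rewrite forallb_forall in H.
    specialize (H _ (mod_in_residues y)). apply Bool.eqb_prop in H.
    rewrite (table_act_congr s a b u1 u2 u1 u2 x y (x mod 20) (y mod 20)), (table_mod x y)
      by (rewrite ?Z.mod_mod; lia).
    exact H.
  - intros H i _. apply forallb_forall. intros j _. rewrite H. apply Bool.eqb_reflx.
Qed.

Definition symmetries : list (gmap * bool) :=
  filter (fun ge => symb (fst ge) (snd ge)) candidates.

Lemma in_symmetries g e : In (g, e) symmetries -> is_sym D g e.
Proof. intros [_ H]%filter_In. now apply symb_spec. Qed.

Lemma reduced_in_symmetries s a b u1 u2 e :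
  is_sym D (GMap s a b u1 u2) e -> In (GMap s a b (u1 mod 20) (u2 mod 20), e) symmetries.
Proof.
  intros H. apply filter_In. split; [apply in_candidates|].
  apply symb_spec. eapply is_sym_shift; [..| exact H]; now rewrite Z.mod_mod.
Qed.

Definition rotations_onlyb (syms : list (gmap * bool)) : bool :=
  forallb (fun ge => negb (xorb (sw (fst ge)) (xorb (n1 (fst ge)) (n2 (fst ge))))) syms.

Lemma no_reflection_of_check : rotations_onlyb symmetries = true ->
  forall g e, is_sym D g e -> ~ orientation_reversing g.
Proof.
  intros H [s a b u1 u2] e Hg Hrev. apply reduced_in_symmetries in Hg.
  unfold rotations_onlyb in H. rewrite forallb_forall in H.
  specialize (H _ Hg). unfold orientation_reversing in Hrev. cbn in H, Hrev.
  now rewrite Hrev in H.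
Qed.

Definition strand_mod (s : strand) : strand :=
  match s with Warp i => Warp (i mod 20) | Weft j => Weft (j mod 20) end.

Definition strand_congrb (s s' : strand) : bool :=
  match s, s' with
  | Warp i, Warp i' | Weft i, Weft i' => i mod 20 =? i' mod 20
  | _, _ => false
  end.

Definition residue_strands : list strand := map Warp residues ++ map Weft residues.

Lemma strand_mod_in_residue_strands s : In (strand_mod s) residue_strands.
Proof.
  apply in_app_iff. destruct s; [left | right]; unfold strand_mod; apply in_map, mod_in_residues.
Qed.

Lemma is_sym_lift g e x y : is_sym D g e ->
  strand_congrb (act_strand g (strand_mod x)) (strand_mod y) = true ->
  exists g', is_sym D g' e /\ act_strand g' x = y.
Proof.
  intros Hg Hxy. destruct g as [s a b u1 u2].
  destruct x as [i|i], y as [k|k], s; cbn in Hxy; try discriminate; apply Z.eqb_eq in Hxy.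
  - exists (GMap false a b (k - sgn a * i) u2).
    split; [eapply is_sym_shift; [| | exact Hg] | gmap_simpl; f_equal; ring];
      destruct a; cbv [sgn] in *; Z.div_mod_to_equations; lia.
  - exists (GMap true a b u1 (k - sgn b * i)).
    split; [eapply is_sym_shift; [| | exact Hg] | gmap_simpl; f_equal; ring];
      destruct b; cbv [sgn] in *; Z.div_mod_to_equations; lia.
  - exists (GMap true a b (k - sgn a * i) u2).
    split; [eapply is_sym_shift; [| | exact Hg] | gmap_simpl; f_equal; ring];
      destruct a; cbv [sgn] in *; Z.div_mod_to_equations; lia.
  - exists (GMap false a b u1 (k - sgn b * i)).
    split; [eapply is_sym_shift; [| | exact Hg] | gmap_simpl; f_equal; ring];
      destruct b; cbv [sgn] in *; Z.div_mod_to_equations; lia.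
Qed.

Definition transitiveb (syms : list (gmap * bool)) : bool :=
  forallb (fun x => forallb (fun y =>
    existsb (fun ge => strand_congrb (act_strand (fst ge) x) y) syms)
    residue_strands) residue_strands.

Lemma isonemal_of_check : transitiveb symmetries = true -> isonemal D.
Proof.
  intros H x y. unfold transitiveb in H. rewrite forallb_forall in H.
  specialize (H _ (strand_mod_in_residue_strands x)). rewrite forallb_forall in H.
  specialize (H _ (strand_mod_in_residue_strands y)).
  apply existsb_exists in H. destruct H as ([g e] & Hin & Hxy).
  destruct (is_sym_lift g e x y (in_symmetries g e Hin) Hxy) as (g' & Hg' & Hmove).
  now exists g', e.
Qed.

Definition liftsb (i k : Z) : bool := existsb (fun j => negb (D (i, j)) && D (k, j)) residues.

Definition linkedb (i i' : Z) : bool := existsb (fun k => liftsb i k && liftsb k i') residues.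

Definition connectedb : bool :=
  forallb (fun i => linkedb i (i + 1) && linkedb (i + 1) i) residues &&
  forallb (fun j =>
    existsb (fun i => D (i, j)) residues && existsb (fun i => negb (D (i, j))) residues) residues.

Lemma linkedb_sound i i' x x' :
  linkedb i i' = true -> i mod 20 = x mod 20 -> i' mod 20 = x' mod 20 ->
  exists k, lifts D x k /\ lifts D k x'.
Proof.
  intros H Hx Hx'. apply existsb_exists in H. destruct H as (k & _ & Hk).
  apply andb_true_iff in Hk. destruct Hk as [H1 H2].
  apply existsb_exists in H1, H2. destruct H1 as (j & _ & Hj). destruct H2 as (j' & _ & Hj').
  apply andb_true_iff in Hj, Hj'. destruct Hj as [Hj1 Hj2], Hj' as [Hj1' Hj2'].
  apply negb_true_iff in Hj1, Hj1'.
  exists k. split; [exists j | exists j']; split.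
  - rewrite <- Hj1. now apply table_congr.
  - exact Hj2.
  - exact Hj1'.
  - rewrite <- Hj2'. now apply table_congr.
Qed.

Lemma not_falls_apart_of_check : connectedb = true -> ~ falls_apart D.
Proof.
  unfold connectedb. rewrite andb_true_iff, !forallb_forall. intros [Hwarps Hwefts].
  apply not_falls_apart_of_lifts.
  - intros i. specialize (Hwarps _ (mod_in_residues i)). apply andb_true_iff in Hwarps.
    apply (linkedb_sound _ _ _ _ (proj1 Hwarps)); Z.div_mod_to_equations; lia.
  - intros i. specialize (Hwarps _ (mod_in_residues i)). apply andb_true_iff in Hwarps.
    apply (linkedb_sound _ _ _ _ (proj2 Hwarps)); Z.div_mod_to_equations; lia.
  - intros j. specialize (Hwefts _ (mod_in_residues j)). apply andb_true_iff in Hwefts.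
    destruct Hwefts as [H _]. apply existsb_exists in H. destruct H as (i & _ & Hi).
    exists i. rewrite <- Hi. apply table_congr; now rewrite ?Z.mod_mod.
  - intros j. specialize (Hwefts _ (mod_in_residues j)). apply andb_true_iff in Hwefts.
    destruct Hwefts as [_ H]. apply existsb_exists in H. destruct H as (i & _ & Hi).
    exists i. apply negb_true_iff in Hi. rewrite <- Hi. apply table_congr; now rewrite ?Z.mod_mod.
Qed.

Definition latticeb (M N : Z) : bool :=
  forallb (fun u1 => forallb (fun u2 =>
    Bool.eqb (in_latticeb M N u1 u2) (symb (transl u1 u2) false || symb (transl u1 u2) true))
    residues) residues.

Lemma lattice_generated_of_check M N : M * M + N * N <> 0 ->
  in_lattice M N 20 0 -> in_lattice M N 0 20 -> latticeb M N = true -> lattice_generated D M N.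
Proof.
  intros Hq H20 H02 H a b.
  change (exists x y, _) with (in_lattice M N a b).
  rewrite (in_lattice_mod M N a b H20 H02), <- in_latticeb_spec by exact Hq.
  transitivity (exists e, is_sym D (transl (a mod 20) (b mod 20)) e).
  { unfold transl. split; intros [e He]; exists e;
      (eapply is_sym_shift; [..| exact He]); now rewrite ?Z.mod_mod. }
  unfold latticeb in H. rewrite forallb_forall in H. specialize (H _ (mod_in_residues a)).
  rewrite forallb_forall in H. specialize (H _ (mod_in_residues b)).
  apply Bool.eqb_prop in H. rewrite H, orb_true_iff, !symb_spec.
  split; [intros [[] He]; auto | intros [He | He]; eauto].
Qed.

Definition periodb (f : Z -> bool) (p : Z) : bool :=
  forallb (fun k => Bool.eqb (f (k + p)) (f k)) residues.

Definition least_periodb (f : Z -> bool) (n : Z) : bool :=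
  (0 <? n) && (n <=? 20) && periodb f n &&
  forallb (fun p => (p <=? 0) || (n <=? p) || negb (periodb f p)) residues.

Lemma least_period_of_check f n : (forall k, f k = f (k mod 20)) -> least_periodb f n = true ->
  least_period f n.
Proof.
  intros Hf H. unfold least_periodb in H. rewrite !andb_true_iff, !Z.ltb_lt, Z.leb_le in H.
  destruct H as (((Hn & Hn20) & Hper) & Hmin).
  split; [exact Hn | split].
  - intros k. unfold periodb in Hper. rewrite forallb_forall in Hper.
    specialize (Hper _ (mod_in_residues k)). apply Bool.eqb_prop in Hper.
    rewrite (Hf (k + n)), (Hf k), <- Hper, (Hf (k mod 20 + n)).
    f_equal. Z.div_mod_to_equations; lia.
  - intros p Hp Hperp. rewrite forallb_forall in Hmin.
    assert (Hin : In p residues).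
    { replace p with (p mod 20) by (Z.div_mod_to_equations; lia). apply mod_in_residues. }
    specialize (Hmin _ Hin). rewrite !orb_true_iff, !Z.leb_le, negb_true_iff in Hmin.
    destruct Hmin as [[Hmin | Hmin] | Hmin]; [lia | lia |].
    enough (periodb f p = true) by congruence.
    apply forallb_forall. intros k _. rewrite Hperp. apply Bool.eqb_reflx.
Qed.

Definition orderb (n : Z) : bool :=
  forallb (fun i =>
    least_periodb (fun j => D (i, j)) n && least_periodb (fun j => D (j, i)) n) residues.

Lemma has_order_of_check n : orderb n = true -> has_order D n.
Proof.
  unfold orderb. rewrite forallb_forall. intros H.
  split; intros i; specialize (H _ (mod_in_residues i)); apply andb_true_iff in H.
  - apply (least_period_ext _ (fun j => D (i mod 20, j))).
    { intros k. apply table_congr; now rewrite ?Z.mod_mod. }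
    apply least_period_of_check; [| apply H]. intros k. apply table_congr; now rewrite ?Z.mod_mod.
  - apply (least_period_ext _ (fun j => D (j, i mod 20))).
    { intros k. apply table_congr; now rewrite ?Z.mod_mod. }
    apply least_period_of_check; [| apply H]. intros k. apply table_congr; now rewrite ?Z.mod_mod.
Qed.

Definition tau_of (m : mark) : bool := match m with Open => false | Filled => true end.

Definition markedb (P1 P2 : Z) (m : mark) : bool :=
  Z.even (P1 + P2) && symb (qt P1 P2) (tau_of m).

Lemma marked_of_check P1 P2 m : markedb P1 P2 m = true -> marked D P1 P2 m.
Proof. unfold markedb. rewrite andb_true_iff, symb_spec. now destruct m. Qed.

End Table.

(* The example fabrics are all based on the level-1 unit with side (1, 2), with a corner of the
   lattice unit at the point (1/2, 1/2). *)
Definition certificate (S : subspecies) (rows : list Z) (n : Z) (mc mz : mark) : bool :=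
  let M := fst (side_vec (sub_level S) 1 2) in
  let N := snd (side_vec (sub_level S) 1 2) in
  let syms := symmetries rows in
  connectedb rows && transitiveb syms && rotations_onlyb syms &&
  negb (M * M + N * N =? 0) && in_latticeb M N 20 0 && in_latticeb M N 0 20 &&
  latticeb rows M N &&
  orderb rows n && markedb rows 1 1 mc && markedb rows (1 + (M - N)) (1 + (N + M)) mz.

Lemma certificate_sound S rows n mc mz : sub_marks S mc mz -> certificate S rows n mc mz = true ->
  exists D M1 N1, M1 * M1 + N1 * N1 = 5 /\ in_subspecies S D M1 N1 /\ has_order D n.
Proof.
  intros Hmarks H. unfold certificate in H. cbv zeta in H.
  rewrite !andb_true_iff, negb_true_iff in H.
  destruct H as (((((((((Hconn & Htrans) & Hrot) & Hq) & H20) & H02) & Hlat) & Hord) & Hmc) & Hmz).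
  apply Z.eqb_neq in Hq.
  apply in_latticeb_spec in H20, H02; try exact Hq.
  pose proof (marked_of_check rows _ _ _ Hmc) as Hcorner.
  exists (table rows), 1, 2.
  split; [reflexivity|]. split; [|exact (has_order_of_check rows n Hord)].
  split; [|split; [split; reflexivity|]].
  - split; [split; [apply table_doubly_periodic | exact (not_falls_apart_of_check rows Hconn)]|].
    split; [exact (isonemal_of_check rows Htrans)|].
    split; [|exact (no_reflection_of_check rows Hrot)].
    exists (qt 1 1), (tau_of mc). split; [apply Hcorner | split; [reflexivity | discriminate]].
  - exists 1, 1, mc, mz. split; [exact Hmarks|].
    split; [exact (lattice_generated_of_check rows _ _ Hq H20 H02 Hlat)|].
    split; [exact Hcorner | exact (marked_of_check rows _ _ _ Hmz)].
Qed.

Definition rows_S33_3 : list Z :=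
  [248050; 247025; 823075; 806675; 586300; 323900; 992200; 988100; 146575; 80975;
   248050; 247025; 823075; 806675; 586300; 323900; 992200; 988100; 146575; 80975].
Definition rows_S35_3 : list Z :=
  [3075; 3075; 49200; 49200; 787200; 787200; 12300; 12300; 196800; 196800;
   3075; 3075; 49200; 49200; 787200; 787200; 12300; 12300; 196800; 196800].
Definition rows_S38 : list Z :=
  [63426; 64449; 33759; 17391; 508431; 770319; 253704; 257796; 135036; 69564;
   985149; 984126; 1014816; 1031184; 540144; 278256; 794871; 790779; 913539; 979011].
Definition rows_S33_4 : list Z :=
  [984125; 985150; 1014800; 1031200; 278000; 540400; 790775; 794875; 913475; 979075;
   63425; 64450; 17375; 33775; 508175; 770575; 253700; 257800; 69500; 135100].
Definition rows_S35_4 : list Z :=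
  [524352; 32772; 8193; 66048; 16512; 1032; 258; 131088; 32772; 264192;
   66048; 4128; 1032; 524352; 131088; 8193; 264192; 16512; 4128; 258].
Definition rows_S37 : list Z :=
  [491570; 196729; 221695; 111614; 12920; 31024; 130870; 261659; 161795; 602119;
   996895; 924479; 525095; 1939; 401395; 737249; 206720; 496384; 1045345; 1040819].

Definition example (S : subspecies) : list Z * Z * mark * mark :=
  match S with
  | S33_3 => (rows_S33_3, 10, Open, Open)
  | S33_4 => (rows_S33_4, 20, Open, Open)
  | S35_3 => (rows_S35_3, 10, Filled, Filled)
  | S35_4 => (rows_S35_4, 20, Filled, Filled)
  | S37 => (rows_S37, 20, Open, Filled)
  | S38 => (rows_S38, 20, Open, Filled)
  end.

Lemma example_certified S :
  let '(rows, n, mc, mz) := example S in sub_marks S mc mz /\ certificate S rows n mc mz = true.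
Proof. destruct S; cbn -[certificate]; (split; [easy | vm_compute; reflexivity]). Qed.

Theorem theorem2 : forall S : subspecies, exists n : Z,
  (exists D M1 N1, M1 * M1 + N1 * N1 = 5 /\ in_subspecies S D M1 N1 /\ has_order D n) /\
  (forall D M1 N1, M1 * M1 + N1 * N1 = 5 -> in_subspecies S D M1 N1 -> has_order D n ->
     exists col1 col2, good_colouring D col1 /\ good_colouring D col2 /\
       different_colourings col1 col2).
Proof.
  intros S. pose proof (example_certified S) as Hex.
  destruct (example S) as [[[rows n] mc] mz]. destruct Hex as [Hmarks Hcert].
  exists n. split.
  - exact (certificate_sound S rows n mc mz Hmarks Hcert).
  - intros D M1 N1 H5 HS _. exact (subspecies_good_colourings S D M1 N1 H5 HS).
Qed.
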